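(* The functor $\widetilde S(\ ):\mathbf{Gpd}\to(t\mathbf{ASmd})_0$ is an equivalence of categories. Moreover, $\widetilde R(\ ):(t\mathbf{ASmd})_0\to\mathbf{Gpd}$ is right adjoint to $\widetilde S(\ )$.
   Context: Write $s(f),t(f)$ for source and target. A quasi-schemoid is a pair $(\mathcal C,S)$ with $\mathcal C$ a small category and $S$ a partition of $mor(\mathcal C)$ into nonempty blocks such that for all $\sigma,\tau,\mu\in S$ and $f,g\in\mu$ the sets $\{(a,b)\in\sigma\times\tau: s(a)=t(b), a\circ b=f\}$ and the analogous set for $g$ have equal cardinality, denoted $p^\mu_{\sigma\tau}$. An association schemoid is a triple $(\mathcal C,S,T)$ where $(\mathcal C,S)$ is a quasi-schemoid, every block containing an endomorphism consists only of endomorphisms, and $T$ is a contravariant endofunctor with $T^2=\mathrm{id}$ and $\{T(f):f\in\sigma\}\in S$ for all $\sigma$. A morphism of association schemoids is a functor mapping each block into a block and commuting with the $T$'s. With $J_0=\{1_x\}$, it is unital if every block meeting $J_0$ lies in $J_0$. A unital association schemoid is semi-thin if (i) $\#\{f\in\sigma:s(f)=x\}\le1$ for all $\sigma,x$, and (ii) $\mathcal C$ is a groupoid with $T(f)=f^{-1}$. $S_0=\{\alpha\in S:\alpha\cap J_0\ne\emptyset\}$. A semi-thin schemoid is thin with set of base points $V\subseteq ob(\mathcal C)$ if (iii) $\#\mathrm{Hom}(x,y)\le1$ for all $x,y$, and (iv) every connected component contains exactly one element of $V$ and $V\to S_0$, $v\mapsto$ (block containing $1_v$), is bijective. $(t\mathbf{ASmd})_0$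 is the category whose objects are thin association schemoids with base points and whose morphisms are morphisms of association schemoids sending base points to base points. $\mathbf{Gpd}$ is the category of groupoids and functors. For a groupoid $\mathcal H$, $\widetilde S(\mathcal H)$ has $ob=mor(\mathcal H)$, $\mathrm{Hom}(g,h)=\{(h,g)\}$ if $t(h)=t(g)$ and empty otherwise, composition $(k,h)\circ(h,g)=(k,g)$, partition $\{\{(k,l):k^{-1}l=f\}\}_{f}$, $T(f)=f$, $T((f,g))=(g,f)$, base points $\{1_x\}$; $\widetilde S(F)(f)=F(f)$, $\widetilde S(F)(f,g)=(F(f),F(g))$. For semi-thin $(\mathcal C,S,T)$, ${}_\alpha S_\beta=\{\sigma:p^\sigma_{\sigma\alpha}=p^\sigma_{\beta\sigma}=1\}$, and $\widetilde R(\mathcal C,S,T)$ is the groupoid with objects $S_0$, $\mathrm{Hom}(\alpha,\beta)={}_\alpha S_\beta$, $\tau\circ\sigma$ the unique $\mu$ with $p^\mu_{\tau\sigma}=1$. For a morphism $F$, $\widetilde R(F)$ sends $\alpha\in S_0$ (resp. $\sigma\in S$) to the unique block of the target containing $F(\alpha)$ (resp. $F(\sigma)$). *)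

From Stdlib Require Import ClassicalEpsilon Relation_Operators.
Set Implicit Arguments.

(* A small category, presented by its set of morphisms with source, target
   and a composition  cmp g f = g o f  (only meaningful when src g = tgt f;
   its value on non-composable pairs is irrelevant junk). *)
Record Cat : Type := mkCat {
  ob : Type; mor : Type;
  src : mor -> ob; tgt : mor -> ob;
  cmp : mor -> mor -> mor }.
Arguments src {c} _. Arguments tgt {c} _. Arguments cmp {c} _ _.

Definition is_id {C : Cat} (e : mor C) : Prop :=
  src e = tgt e /\ (forall f : mor C, tgt f = src e -> cmp e f = f)
  /\ (forall f : mor C, src f = tgt e -> cmp f e = f).

Definition is_cat (C : Cat) : Prop :=
  (forall g f : mor C, src g = tgt f ->
      src (cmp g f) = src f /\ tgt (cmp g f) = tgt g) /\
  (forall h g f : mor C, src h = tgt g -> src g = tgt f ->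
      cmp h (cmp g f) = cmp (cmp h g) f) /\
  (forall x : ob C, exists e : mor C, is_id e /\ src e = x).

Definition is_inverse {C : Cat} (f g : mor C) : Prop :=
  src g = tgt f /\ tgt g = src f /\ is_id (cmp g f) /\ is_id (cmp f g).

Definition is_groupoid (C : Cat) : Prop :=
  is_cat C /\ forall f : mor C, exists g, is_inverse f g.

Record Fun (C D : Cat) := mkFun { fob : ob C -> ob D; fmor : mor C -> mor D }.
Arguments fob {C D} _ _. Arguments fmor {C D} _ _.

Definition is_functor {C D : Cat} (F : Fun C D) : Prop :=
  (forall f, src (fmor F f) = fob F (src f) /\ tgt (fmor F f) = fob F (tgt f)) /\
  (forall g f, src g = tgt f -> fmor F (cmp g f) = cmp (fmor F g) (fmor F f)) /\
  (forall e, is_id e -> is_id (fmor F e)).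

Definition feq {C D : Cat} (F G : Fun C D) : Prop :=
  (forall x, fob F x = fob G x) /\ (forall f, fmor F f = fmor G f).

Definition fid (C : Cat) : Fun C C := mkFun C C (fun x => x) (fun f => f).
Definition fcomp {C D E : Cat} (G : Fun D E) (F : Fun C D) : Fun C E :=
  mkFun C E (fun x => fob G (fob F x)) (fun f => fmor G (fmor F f)).

(* Schemoid data: category, partition of mor given by a map blk onto the type
   of blocks blk_t, the functor T (on objects and morphisms), base points. *)
Record Smd : Type := mkSmd {
  scat : Cat; blk_t : Type; blk : mor scat -> blk_t;
  Tob : ob scat -> ob scat; Tmor : mor scat -> mor scat;
  base : ob scat -> Prop }.

Definition same_card (A B : Type) : Prop :=
  exists (i : A -> B) (j : B -> A), (forall a, j (i a) = a) /\ (forall b, i (j b) = b).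

Definition factor_rel (X : Smd) (s t : blk_t X) (f : mor (scat X))
  (ab : mor (scat X) * mor (scat X)) : Prop :=
  blk X (fst ab) = s /\ blk X (snd ab) = t /\ src (fst ab) = tgt (snd ab)
  /\ cmp (fst ab) (snd ab) = f.

Definition is_quasi_schemoid (X : Smd) : Prop :=
  is_cat (scat X) /\ (forall s : blk_t X, exists f, blk X f = s) /\
  (forall (s t : blk_t X) (f g : mor (scat X)), blk X f = blk X g ->
     same_card {ab | factor_rel X s t f ab} {ab | factor_rel X s t g ab}).

Definition pone (X : Smd) (s t mu : blk_t X) : Prop :=
  exists f, blk X f = mu /\ exists! ab, factor_rel X s t f ab.

Definition is_assoc_schemoid (X : Smd) : Prop :=
  is_quasi_schemoid X /\
  (forall f g, blk X f = blk X g -> src f = tgt f -> src g = tgt g) /\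
  (forall f, src (Tmor X f) = Tob X (tgt f) /\ tgt (Tmor X f) = Tob X (src f)) /\
  (forall g f, src g = tgt f -> Tmor X (cmp g f) = cmp (Tmor X f) (Tmor X g)) /\
  (forall e, is_id e -> is_id (Tmor X e)) /\
  (forall x, Tob X (Tob X x) = x) /\ (forall f, Tmor X (Tmor X f) = f) /\
  (forall f g, blk X f = blk X g <-> blk X (Tmor X f) = blk X (Tmor X g)).

Definition is_unital (X : Smd) : Prop :=
  is_assoc_schemoid X /\ forall f g, blk X f = blk X g -> is_id f -> is_id g.

Definition is_semithin (X : Smd) : Prop :=
  is_unital X /\
  (forall f g, blk X f = blk X g -> src f = src g -> f = g) /\
  is_groupoid (scat X) /\ (forall f, is_inverse f (Tmor X f)).

Definition S0 (X : Smd) (a : blk_t X) : Prop := exists f, blk X f = a /\ is_id f.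

Definition conn (X : Smd) : ob (scat X) -> ob (scat X) -> Prop :=
  clos_refl_sym_trans _ (fun x y => exists f : mor (scat X), src f = x /\ tgt f = y).

Definition is_tASmd0 (X : Smd) : Prop :=
  is_semithin X /\
  (forall f g : mor (scat X), src f = src g -> tgt f = tgt g -> f = g) /\
  (forall x, exists! v, base X v /\ conn X x v) /\
  (forall v w e e', base X v -> base X w -> is_id e -> src e = v ->
     is_id e' -> src e' = w -> blk X e = blk X e' -> v = w) /\
  (forall a, S0 X a -> exists v e, base X v /\ is_id e /\ src e = v /\ blk X e = a).

Definition is_tmor (X Y : Smd) (F : Fun (scat X) (scat Y)) : Prop :=
  is_functor F /\
  (forall f g, blk X f = blk X g -> blk Y (fmor F f) = blk Y (fmor F g)) /\
  (forall x, fob F (Tob X x) = Tob Y (fob F x)) /\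
  (forall f, fmor F (Tmor X f) = Tmor Y (fmor F f)) /\
  (forall x, base X x -> base Y (fob F x)).

Definition inv {H : Cat} (k : mor H) : mor H :=
  epsilon (inhabits k) (fun g => is_inverse k g).

Definition SmorT (H : Cat) : Type := {p : mor H * mor H | tgt (fst p) = tgt (snd p)}.

(* (h,g) in Hom(g,h):  source = g, target = h *)
Definition S_cmp (H : Cat) (a b : SmorT H) : SmorT H :=
  match excluded_middle_informative (snd (proj1_sig a) = fst (proj1_sig b)) with
  | left e => exist _ (fst (proj1_sig a), snd (proj1_sig b))
      (eq_trans (proj2_sig a) (eq_trans (f_equal (@tgt H) e) (proj2_sig b)))
  | right _ => a
  end.

Definition SC (H : Cat) : Cat :=
  {| ob := mor H; mor := SmorT H;
     src := fun p => snd (proj1_sig p); tgt := fun p => fst (proj1_sig p);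
     cmp := @S_cmp H |}.

Definition S_swap (H : Cat) (p : SmorT H) : SmorT H :=
  exist _ (snd (proj1_sig p), fst (proj1_sig p)) (eq_sym (proj2_sig p)).

Definition SH (H : Cat) : Smd :=
  {| scat := SC H; blk_t := mor H;
     blk := fun p : SmorT H => cmp (inv (fst (proj1_sig p))) (snd (proj1_sig p));
     Tob := fun x => x; Tmor := @S_swap H;
     base := fun x : mor H => is_id x |}.

Definition SF_mor (H H' : Cat) (F : Fun H H') (p : SmorT H) : SmorT H' :=
  match excluded_middle_informative
          (tgt (fmor F (fst (proj1_sig p))) = tgt (fmor F (snd (proj1_sig p)))) with
  | left e => exist _ (fmor F (fst (proj1_sig p)), fmor F (snd (proj1_sig p))) e
  | right _ => exist _ (fmor F (fst (proj1_sig p)), fmor F (fst (proj1_sig p))) eq_refl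
  end.

Definition SF {H H' : Cat} (F : Fun H H') : Fun (scat (SH H)) (scat (SH H')) :=
  mkFun (SC H) (SC H') (fmor F) (SF_mor F).

Definition inS (X : Smd) (a b s : blk_t X) : Prop := pone X s a s /\ pone X b s s.

Definition RobT (X : Smd) : Type := {a : blk_t X | S0 X a}.
Definition RmorT (X : Smd) : Type :=
  {t : blk_t X * blk_t X * blk_t X |
     S0 X (fst (fst t)) /\ S0 X (snd (fst t)) /\ inS X (fst (fst t)) (snd (fst t)) (snd t)}.

Definition R_src (X : Smd) (m : RmorT X) : RobT X :=
  exist _ (fst (fst (proj1_sig m))) (proj1 (proj2_sig m)).
Definition R_tgt (X : Smd) (m : RmorT X) : RobT X :=
  exist _ (snd (fst (proj1_sig m))) (proj1 (proj2 (proj2_sig m))).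
Definition R_cmp (X : Smd) (t s : RmorT X) : RmorT X :=
  epsilon (inhabits s) (fun m =>
    fst (fst (proj1_sig m)) = fst (fst (proj1_sig s)) /\
    snd (fst (proj1_sig m)) = snd (fst (proj1_sig t)) /\
    pone X (snd (proj1_sig t)) (snd (proj1_sig s)) (snd (proj1_sig m))).

Definition RC (X : Smd) : Cat :=
  {| ob := RobT X; mor := RmorT X; src := @R_src X; tgt := @R_tgt X; cmp := @R_cmp X |}.

(* G is R~(F): it sends alpha (resp. sigma) to the block containing F(alpha)
   (resp. F(sigma)). *)
Definition is_RF {X Y : Smd} (F : Fun (scat X) (scat Y)) (G : Fun (RC X) (RC Y)) : Prop :=
  (forall (a : RobT X) f, blk X f = proj1_sig a ->
      proj1_sig (fob G a) = blk Y (fmor F f)) /\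
  (forall (m : RmorT X) f, blk X f = snd (proj1_sig m) ->
      proj1_sig (fmor G m) =
        (proj1_sig (fob G (R_src m)), proj1_sig (fob G (R_tgt m)), blk Y (fmor F f))).

(* The pair category on mor H is a groupoid with
      at most one morphism between two objects; the block of a pair (k,l) is
      k^-1 l, and a pair factors through blocks s,t iff s o t = k^-1 l, in
      which case the factorisation is unique.  Hence S~(H) is a thin
      association schemoid.  On functors S~ is functorial, faithful (objects
      of S~(H) are morphisms of H) and full (a morphism S~(H) -> S~(H') acts
      on objects as a functor H -> H').
   3. In a thin schemoid X every structure constant is transported along
      blocks.  Consequently the identity blocks at the ends of a block and
      the block of a composite depend only on the blocks involved; this makes
      R~(X) a groupoid and gives R~ on morphisms.
   4. The counit eps_X : S~R~(X) -> X sends a block to the source of its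
      unique representative ending at a base point.  Base points give an
      inverse Q_X of eps_X, so S~ is essentially surjective; eps is natural
      by thinness, and its universal property follows from fullness of S~
      applied to Q_X o P. *)
From Stdlib Require Import ClassicalEpsilon Relation_Operators ProofIrrelevance.

Set Implicit Arguments.

Lemma sig_ext (A : Type) (P : A -> Prop) (a b : {x | P x}) :
  proj1_sig a = proj1_sig b -> a = b.
Proof.
  destruct a as [a pa], b as [b pb]; simpl; intros ->.
  f_equal; apply proof_irrelevance.
Qed.

Section Category.
Variable C : Cat.
Hypothesis HC : is_cat C.

Lemma c_src (g f : mor C) : src g = tgt f -> src (cmp g f) = src f.
Proof. intro E; apply (proj1 HC g f E). Qed.
Lemma c_tgt (g f : mor C) : src g = tgt f -> tgt (cmp g f) = tgt g.
Proof. intro E; apply (proj1 HC g f E). Qed.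
Lemma c_assoc (h g f : mor C) : src h = tgt g -> src g = tgt f ->
  cmp h (cmp g f) = cmp (cmp h g) f.
Proof. apply (proj1 (proj2 HC)). Qed.
Lemma c_idex (x : ob C) : exists e, is_id e /\ src e = x.
Proof. apply (proj2 (proj2 HC)). Qed.

Lemma id_uniq (e e' : mor C) : is_id e -> is_id e' -> src e = src e' -> e = e'.
Proof.
  intros [E1 [E2 E3]] [F1 [F2 F3]] S.
  transitivity (cmp e e').
  - symmetry; apply F3; congruence.
  - apply E2; congruence.
Qed.

Lemma id_l (e f : mor C) : is_id e -> tgt f = src e -> cmp e f = f.
Proof. intros [_ [E _]] H; auto. Qed.
Lemma id_r (e f : mor C) : is_id e -> src f = tgt e -> cmp f e = f.
Proof. intros [_ [_ E]] H; auto. Qed.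
Lemma id_st (e : mor C) : is_id e -> src e = tgt e.
Proof. intros [E _]; auto. Qed.
End Category.

Section Groupoid.
Variable H : Cat.
Hypothesis HG : is_groupoid H.
Let HC : is_cat H := proj1 HG.

Lemma inv_spec (k : mor H) : is_inverse k (inv k).
Proof. unfold inv. apply epsilon_spec. apply (proj2 HG k). Qed.

Lemma inverse_uniq (f g g' : mor H) : is_inverse f g -> is_inverse f g' -> g = g'.
Proof.
  intros [A1 [A2 [A3 A4]]] [B1 [B2 [B3 B4]]].
  transitivity (cmp g (cmp f g')).
  - symmetry. apply id_r; auto; try (rewrite c_tgt; auto; congruence).
  - rewrite c_assoc; auto; try congruence. apply id_l; auto;
    try (rewrite c_src; congruence).
Qed.

Lemma inv_src (k : mor H) : src (inv k) = tgt k.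
Proof. apply (inv_spec k). Qed.
Lemma inv_tgt (k : mor H) : tgt (inv k) = src k.
Proof. apply (inv_spec k). Qed.
Lemma inv_l (k : mor H) : is_id (cmp (inv k) k).
Proof. apply (inv_spec k). Qed.
Lemma inv_r (k : mor H) : is_id (cmp k (inv k)).
Proof. apply (inv_spec k). Qed.
Lemma inv_l_src (k : mor H) : src (cmp (inv k) k) = src k.
Proof. apply c_src; auto. apply inv_src. Qed.
Lemma inv_r_src (k : mor H) : src (cmp k (inv k)) = tgt k.
Proof. rewrite c_src; auto; [apply inv_src| rewrite inv_tgt; auto]. Qed.

Lemma inv_id (e : mor H) : is_id e -> inv e = e.
Proof.
  intro E. symmetry. apply (inverse_uniq (f:=e)); [|apply inv_spec].
  assert (cmp e e = e) as EE by (apply id_l; auto; symmetry; apply id_st; auto).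
  split; [|split]; [apply id_st; auto| symmetry; apply id_st; auto|].
  rewrite EE; auto.
Qed.

Lemma inv_inv (k : mor H) : inv (inv k) = k.
Proof.
  symmetry. apply (inverse_uniq (f := inv k)); [|apply inv_spec].
  destruct (inv_spec k) as [A [B [C1 D]]]. split; [|split]; auto.
Qed.

Lemma cancel_l (m t k : mor H) : src m = tgt t -> cmp m t = k -> cmp (inv m) k = t.
Proof.
  intros E <-. rewrite c_assoc; auto; [|apply inv_src].
  apply id_l; auto; [apply inv_l|]. rewrite inv_l_src; auto.
Qed.

Lemma cancel_l' (m t k : mor H) : tgt k = tgt m -> cmp (inv m) k = t -> cmp m t = k.
Proof.
  intros E <-. rewrite c_assoc; auto; [|rewrite inv_tgt; auto|rewrite inv_src; auto].
  apply id_l; auto; [apply inv_r|]. rewrite inv_r_src; auto.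
Qed.

Lemma cancel_r (a b k : mor H) :
  src a = tgt k -> src b = tgt k -> cmp a k = cmp b k -> a = b.
Proof.
  intros Ea Eb E.
  assert (K : forall c, src c = tgt k -> cmp (cmp c k) (inv k) = c).
  { intros c Ec. rewrite <- c_assoc; auto; [|rewrite inv_tgt; auto].
    apply id_r; auto; [apply inv_r|]. rewrite c_tgt; auto. rewrite inv_tgt; auto. }
  rewrite <- (K a), <- (K b); auto. rewrite E; auto.
Qed.

Lemma inv_cmp (g f : mor H) : src g = tgt f -> inv (cmp g f) = cmp (inv f) (inv g).
Proof.
  intro E. symmetry. apply (inverse_uniq (f := cmp g f)); [|apply inv_spec].
  assert (S1 : src (inv f) = tgt (inv g)) by (rewrite inv_src, inv_tgt; auto).
  split; [|split; [|split]].
  - rewrite c_src; auto. rewrite inv_src, c_tgt; auto.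
  - rewrite c_tgt; auto. rewrite inv_tgt, c_src; auto.
  - rewrite c_assoc; auto; [|rewrite c_src; auto; rewrite inv_src; auto].
    rewrite <- (c_assoc HC (inv f)); auto; [|rewrite inv_src; auto].
    rewrite (id_r _ (inv_l g));
      [apply inv_l|]; try (rewrite c_tgt; auto; rewrite ?inv_tgt, ?inv_src; auto).
  - rewrite c_assoc; auto; [|rewrite c_src, inv_tgt; auto; rewrite inv_src; auto].
    rewrite <- (c_assoc HC g f); auto; [|rewrite inv_tgt; auto].
    rewrite (id_r _ (inv_r f)); [apply inv_r|].
    rewrite c_tgt; auto; rewrite ?inv_tgt, ?inv_src; auto.
Qed.

Lemma inv_l_eq (h k : mor H) : tgt h = tgt k -> is_id (cmp (inv h) k) -> k = h.
Proof.
  intros E I. assert (Q : cmp h (cmp (inv h) k) = k) by (apply cancel_l'; auto).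
  rewrite <- Q at 1. apply id_r; auto.
  rewrite c_tgt; auto; rewrite ?inv_tgt, ?inv_src; auto.
Qed.

Lemma mid_cancel (x m y : mor H) : src x = tgt m -> tgt y = tgt m ->
  cmp (cmp x m) (cmp (inv m) y) = cmp x y.
Proof.
  intros E1 E2. rewrite <- c_assoc; auto;
    [|rewrite c_tgt, inv_tgt; auto; rewrite inv_src; auto].
  f_equal. apply cancel_l'; auto.
Qed.
End Groupoid.

Ltac st := repeat first
  [ rewrite inv_src by auto | rewrite inv_tgt by auto
  | rewrite c_src by (auto; st) | rewrite c_tgt by (auto; st) ]; auto; try congruence.

Lemma functor_inv (H H' : Cat) (F : Fun H H') : is_groupoid H -> is_groupoid H' ->
  is_functor F -> forall h, fmor F (inv h) = inv (fmor F h).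
Proof.
  intros G G' [F1 [F2 F3]] h.
  apply (inverse_uniq G' (f := fmor F h)); [|apply inv_spec; auto].
  destruct (inv_spec G h) as [A [B [C1 D]]].
  split; [|split; [|split]].
  - rewrite (proj1 (F1 _)), (proj2 (F1 _)). congruence.
  - rewrite (proj1 (F1 _)), (proj2 (F1 _)). congruence.
  - rewrite <- F2; auto.
  - rewrite <- F2; auto.
Qed.

(* A functor is determined by its action on morphisms (every object has an
   identity). *)
Lemma functor_ob_eq (H H' : Cat) (F G : Fun H H') : is_cat H ->
  is_functor F -> is_functor G -> (forall f, fmor F f = fmor G f) -> feq F G.
Proof.
  intros HC [F1 _] [G1 _] E. split; auto. intro x.
  destruct (c_idex HC x) as [e [Ie Se]]. subst x.
  rewrite <- (proj1 (F1 e)), <- (proj1 (G1 e)), E. reflexivity.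
Qed.

Lemma fcomp_functor (H1 H2 H3 : Cat) (F : Fun H1 H2) (G : Fun H2 H3) :
  is_functor F -> is_functor G -> is_functor (fcomp G F).
Proof.
  intros [F1 [F2 F3]] [G1 [G2 G3]]. split; [|split]; simpl.
  - intro f. rewrite (proj1 (G1 _)), (proj2 (G1 _)), (proj1 (F1 _)), (proj2 (F1 _)). auto.
  - intros g f E. rewrite F2, G2; auto. rewrite (proj1 (F1 _)), (proj2 (F1 _)). congruence.
  - auto.
Qed.

Lemma same_card_ex (A : Type) (P Q : A -> Prop) :
  (forall x y, P x -> P y -> x = y) -> (forall x y, Q x -> Q y -> x = y) ->
  ((exists x, P x) <-> (exists y, Q y)) -> same_card {x | P x} {y | Q y}.
Proof.
  intros SP SQ [PQ QP].
  exists (fun a => exist Q (proj1_sig (constructive_indefinite_description _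
                               (PQ (ex_intro _ _ (proj2_sig a)))))
                 (proj2_sig (constructive_indefinite_description _
                               (PQ (ex_intro _ _ (proj2_sig a)))))).
  exists (fun b => exist P (proj1_sig (constructive_indefinite_description _
                               (QP (ex_intro _ _ (proj2_sig b)))))
                 (proj2_sig (constructive_indefinite_description _
                               (QP (ex_intro _ _ (proj2_sig b)))))).
  split; intros; apply sig_ext; simpl.
  - apply SP; apply proj2_sig.
  - apply SQ; apply proj2_sig.
Qed.

Section PairCategory.
Variable H : Cat.

Lemma smor_eq (p q : SmorT H) : fst (proj1_sig p) = fst (proj1_sig q) ->
  snd (proj1_sig p) = snd (proj1_sig q) -> p = q.
Proof.
  intros E1 E2. apply sig_ext.
  destruct (proj1_sig p), (proj1_sig q); simpl in *; congruence.
Qed.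

Lemma S_cmp_val (a b : SmorT H) : snd (proj1_sig a) = fst (proj1_sig b) ->
  proj1_sig (S_cmp a b) = (fst (proj1_sig a), snd (proj1_sig b)).
Proof.
  intro E. unfold S_cmp. destruct (excluded_middle_informative _); [reflexivity|contradiction].
Qed.

Lemma SC_is_id (p : SmorT H) : @is_id (SC H) p <-> fst (proj1_sig p) = snd (proj1_sig p).
Proof.
  split.
  - intros [E _]. simpl in E. auto.
  - intro E. split; [simpl; auto|split].
    + intros f Ef. simpl in *. apply smor_eq; rewrite S_cmp_val; simpl; congruence.
    + intros f Ef. simpl in *. apply smor_eq; rewrite S_cmp_val; simpl; congruence.
Qed.

Lemma SC_cat : is_cat (SC H).
Proof.
  split; [|split].
  - intros g f E. simpl in *. rewrite S_cmp_val; auto.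
  - intros h g f E1 E2. simpl in *. apply smor_eq;
    repeat (rewrite S_cmp_val; simpl; auto); rewrite S_cmp_val in *; simpl; auto.
  - intro x. exists (exist _ (x, x) eq_refl : SmorT H).
    split; [apply SC_is_id; reflexivity|reflexivity].
Qed.

Lemma S_swap_inverse (f : SmorT H) : @is_inverse (SC H) f (S_swap f).
Proof.
  split; [reflexivity|split; [reflexivity|split]];
    apply SC_is_id; simpl; rewrite S_cmp_val; reflexivity.
Qed.

Lemma SC_groupoid : is_groupoid (SC H).
Proof.
  split; [apply SC_cat|]. intro f. exists (S_swap f). apply S_swap_inverse.
Qed.

Hypothesis HG : is_groupoid H.
Let HC : is_cat H := proj1 HG.

Lemma SH_blk (p : SmorT H) :
  blk (SH H) p = cmp (inv (fst (proj1_sig p))) (snd (proj1_sig p)).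
Proof. reflexivity. Qed.

Lemma SH_factor_ex (s t : mor H) (f : SmorT H) :
  (exists ab, factor_rel (SH H) s t f ab) <->
  (src s = tgt t /\ cmp s t = cmp (inv (fst (proj1_sig f))) (snd (proj1_sig f))).
Proof.
  split.
  - intros [[a b] [E1 [E2 [E3 E4]]]]. simpl in *. subst f.
    destruct a as [[a1 a2] pa], b as [[b1 b2] pb]; simpl in *.
    rewrite S_cmp_val by (simpl; auto). subst. simpl in *.
    split.
    + rewrite c_src, c_tgt; auto; rewrite ?inv_tgt, ?inv_src; auto.
    + apply mid_cancel; auto. rewrite inv_src; auto.
  - intros [E1 E2]. destruct f as [[f1 f2] pf]; simpl in *.
    assert (Ts : tgt s = src f1).
    { rewrite <- (c_tgt HC s t E1), E2, c_tgt; auto; rewrite ?inv_tgt, ?inv_src; auto. }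
    set (m := cmp f1 s).
    assert (Tm : tgt f1 = tgt m) by (unfold m; rewrite c_tgt; auto).
    assert (Tm2 : tgt m = tgt f2) by congruence.
    exists (exist _ (f1, m) Tm : SmorT H, exist _ (m, f2) Tm2 : SmorT H).
    split; [|split; [|split]]; simpl.
    + apply cancel_l; auto.
    + apply cancel_l; [auto|unfold m; st|].
      unfold m. rewrite <- c_assoc; auto. rewrite E2. apply cancel_l'; st.
    + reflexivity.
    + apply smor_eq; rewrite S_cmp_val; simpl; auto.
Qed.

(* Such a factorisation is unique: all structure constants are 0 or 1. *)
Lemma SH_factor_uniq (s t : mor H) (f : SmorT H) ab ab' :
  factor_rel (SH H) s t f ab -> factor_rel (SH H) s t f ab' -> ab = ab'.
Proof.
  destruct ab as [a b], ab' as [a' b'].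
  intros [E1 [E2 [E3 E4]]] [F1 [F2 [F3 F4]]]. simpl in *.
  apply (f_equal (@proj1_sig _ _)) in E4. apply (f_equal (@proj1_sig _ _)) in F4.
  rewrite S_cmp_val in E4, F4 by auto.
  assert (Ea := f_equal fst E4). assert (Eb := f_equal snd E4).
  assert (Fa := f_equal fst F4). assert (Fb := f_equal snd F4).
  simpl in Ea, Eb, Fa, Fb.
  assert (A1 : fst (proj1_sig a) = fst (proj1_sig a')) by congruence.
  assert (A2 : snd (proj1_sig a) = snd (proj1_sig a')).
  { assert (X1 : cmp (fst (proj1_sig a)) s = snd (proj1_sig a)) by
      (apply cancel_l'; auto; symmetry; apply (proj2_sig a)).
    assert (X2 : cmp (fst (proj1_sig a')) s = snd (proj1_sig a')) by
      (apply cancel_l'; auto; symmetry; apply (proj2_sig a')).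
    congruence. }
  f_equal; apply smor_eq; congruence.
Qed.

Lemma SH_blk_swap (p : SmorT H) : blk (SH H) (S_swap p) = inv (blk (SH H) p).
Proof.
  rewrite !SH_blk. destruct p as [[h k] pp]; simpl.
  rewrite inv_cmp; auto; [|st]. rewrite inv_inv; auto.
Qed.

Lemma SH_blk_id (p : SmorT H) :
  is_id (blk (SH H) p) <-> fst (proj1_sig p) = snd (proj1_sig p).
Proof.
  rewrite SH_blk. split.
  - intro I. symmetry. apply (inv_l_eq HG); auto. apply (proj2_sig p).
  - intros <-. apply inv_l; auto.
Qed.

Lemma SH_assoc : is_assoc_schemoid (SH H).
Proof.
  split; [split; [apply SC_cat| split]|
          split; [|split; [|split; [|split; [|split; [|split]]]]]].
  - intro s. simpl in s.
    set (e := cmp s (inv s)).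
    assert (Te : tgt e = tgt s) by (unfold e; st).
    exists (exist _ (e, s) Te : SmorT H). rewrite SH_blk; simpl.
    assert (Ie : is_id e) by (apply inv_r; auto).
    rewrite inv_id; auto. apply id_l; auto. unfold e. st.
  - intros s t f g E. apply same_card_ex; try (intros; eapply SH_factor_uniq; eauto).
    rewrite !SH_factor_ex, <- !SH_blk, E. tauto.
  - intros f g E Ef. simpl in Ef. symmetry in Ef.
    assert (I : is_id (blk (SH H) g)) by (rewrite <- E; apply SH_blk_id; auto).
    symmetry. apply SH_blk_id; auto.
  - intro f; split; reflexivity.
  - intros g f E. apply smor_eq; simpl; rewrite ?S_cmp_val; simpl; auto.
  - intros e I. apply SC_is_id in I. apply SC_is_id. simpl. auto.
  - intros x; reflexivity.
  - intros f; apply smor_eq; reflexivity.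
  - intros f g. change (Tmor (SH H) f) with (S_swap f).
    change (Tmor (SH H) g) with (S_swap g).
    rewrite !SH_blk_swap. split; [intros ->; auto|].
    intro E. rewrite <- (inv_inv HG (blk (SH H) f)), <- (inv_inv HG (blk (SH H) g)), E; auto.
Qed.

Lemma SH_semithin : is_semithin (SH H).
Proof.
  split; [split; [exact SH_assoc|]|split; [|split; [apply SC_groupoid|]]].
  - intros f g E I. apply SC_is_id in I. apply SC_is_id.
    apply SH_blk_id. rewrite <- E. apply SH_blk_id. auto.
  - intros f g E S. simpl in S. rewrite !SH_blk in E.
    apply smor_eq; auto. rewrite S in E.
    apply cancel_r in E; auto;
      [| rewrite inv_src; auto; rewrite (proj2_sig f), S; reflexivity
       | rewrite inv_src; auto; rewrite (proj2_sig g); reflexivity].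
    rewrite <- (inv_inv HG (fst (proj1_sig f))), <- (inv_inv HG (fst (proj1_sig g))), E; auto.
  - apply S_swap_inverse.
Qed.

Lemma SH_conn_tgt (x v : mor H) : conn (SH H) x v -> tgt x = tgt v.
Proof.
  induction 1; auto; try congruence.
  destruct H0 as [f [E1 E2]]. subst. simpl. symmetry. apply (proj2_sig f).
Qed.

Lemma SH_tASmd0 : is_tASmd0 (SH H).
Proof.
  split; [exact SH_semithin|split; [|split; [|split]]].
  - intros f g S T. simpl in *. apply smor_eq; auto.
  - intro x. simpl in x. set (e := cmp x (inv x)).
    exists e. split; [split|].
    + apply inv_r; auto.
    + apply rst_step. assert (Te : tgt e = tgt x) by (unfold e; st).
      exists (exist _ (e, x) Te : SmorT H). split; reflexivity.
    + intros v [Iv Cv]. apply SH_conn_tgt in Cv. simpl in *.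
      apply id_uniq; [apply inv_r; auto| auto |]. rewrite (id_st Iv). unfold e. st.
  - intros v w e e' Bv Bw Ie Se Ie' Se'. simpl in *.
    apply SC_is_id in Ie. apply SC_is_id in Ie'. intro Eb.
    change (blk (SH H) e = blk (SH H) e') in Eb. rewrite !SH_blk in Eb.
    rewrite Ie, Ie', Se, Se', !inv_id in Eb; auto.
    rewrite !(id_l (e:=_) _ Bv), !(id_l (e:=_) _ Bw) in Eb; auto;
      symmetry; apply id_st; auto.
  - intros a [f [Ea If]]. apply SC_is_id in If. simpl in *.
    assert (Ia : is_id a) by (rewrite <- Ea; apply SH_blk_id; auto).
    exists a. exists (exist _ (a, a) eq_refl : SmorT H).
    split; [auto|split; [apply SC_is_id; reflexivity|split; [reflexivity|]]].
    simpl. rewrite inv_id; auto. apply id_l; auto. symmetry; apply id_st; auto.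
Qed.
End PairCategory.

Lemma SF_mor_val (H H' : Cat) (F : Fun H H') (p : SmorT H) :
  tgt (fmor F (fst (proj1_sig p))) = tgt (fmor F (snd (proj1_sig p))) ->
  proj1_sig (SF_mor F p) = (fmor F (fst (proj1_sig p)), fmor F (snd (proj1_sig p))).
Proof.
  intro E. unfold SF_mor. destruct (excluded_middle_informative _); [reflexivity|contradiction].
Qed.

Lemma SF_mor_val' (H H' : Cat) (F : Fun H H') (p : SmorT H) : is_functor F ->
  proj1_sig (SF_mor F p) = (fmor F (fst (proj1_sig p)), fmor F (snd (proj1_sig p))).
Proof.
  intros [F1 _]. apply SF_mor_val.
  rewrite (proj2 (F1 _)), (proj2 (F1 _)), (proj2_sig p). reflexivity.
Qed.

Lemma SF_tmor (H H' : Cat) (F : Fun H H') : is_groupoid H -> is_groupoid H' ->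
  is_functor F -> is_tmor (SH H) (SH H') (SF F).
Proof.
  intros G G' HF. assert (HF' := HF). destruct HF' as [F1 [F2 F3]].
  assert (V := fun p => SF_mor_val' p HF).
  assert (Bk : forall p, blk (SH H') (fmor (SF F) p) = fmor F (blk (SH H) p)).
  { intro p. simpl. rewrite V. simpl.
    rewrite F2; [|rewrite inv_src; auto; apply (proj2_sig p)].
    rewrite functor_inv; auto. }
  split; [split; [|split]|split; [|split; [|split]]].
  - intro f. simpl. rewrite V. simpl. auto.
  - intros g f E. apply smor_eq; simpl in *; rewrite V; rewrite ?S_cmp_val; simpl; auto;
    rewrite V; simpl; auto; rewrite V; simpl; auto; congruence.
  - intros e I. apply SC_is_id in I. apply SC_is_id. simpl. rewrite V. simpl. congruence.
  - intros f g E. rewrite !Bk, E. reflexivity.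
  - intro x. reflexivity.
  - intro f. apply smor_eq; simpl; rewrite !V; reflexivity.
  - intros x Bx. simpl in *. apply F3; auto.
Qed.

Lemma SF_fid (H : Cat) : feq (SF (fid H)) (fid (scat (SH H))).
Proof.
  split; [reflexivity|]. intro f.
  apply smor_eq; simpl; rewrite SF_mor_val; simpl; auto; apply (proj2_sig f).
Qed.

Lemma SF_fcomp (H1 H2 H3 : Cat) (F : Fun H1 H2) (G : Fun H2 H3) :
  is_functor F -> is_functor G -> feq (SF (fcomp G F)) (fcomp (SF G) (SF F)).
Proof.
  intros HF HG. split; [reflexivity|]. intro f. apply smor_eq; simpl;
  rewrite (SF_mor_val' _ (fcomp_functor HF HG)); simpl;
  rewrite (SF_mor_val' _ HG); simpl; rewrite (SF_mor_val' _ HF); reflexivity.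
Qed.

(* Faithfulness: S~(F) acts on objects as F acts on morphisms. *)
Lemma SF_faithful (H H' : Cat) (F G : Fun H H') : is_groupoid H ->
  is_functor F -> is_functor G -> feq (SF F) (SF G) -> feq F G.
Proof. intros HG HF HGf [E _]. apply functor_ob_eq; auto. apply HG. Qed.

(* Fullness: a morphism P : S~(H) -> S~(H') is S~ of the functor acting as
   P on morphisms of H and sending x to the source of P(1_x). *)
Section Full.
Variables H H' : Cat.
Hypothesis HG : is_groupoid H.
Hypothesis HG' : is_groupoid H'.
Let HC := proj1 HG.
Variable P : Fun (scat (SH H)) (scat (SH H')).
Hypothesis HP : is_tmor (SH H) (SH H') P.

Lemma P_fst (p : SmorT H) : fst (proj1_sig (fmor P p)) = fob P (fst (proj1_sig p)).
Proof. apply (proj1 (proj1 HP) p). Qed.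
Lemma P_snd (p : SmorT H) : snd (proj1_sig (fmor P p)) = fob P (snd (proj1_sig p)).
Proof. apply (proj1 (proj1 HP) p). Qed.

(* P preserves "same target" (it maps pairs to pairs) ... *)
Lemma P_pair (h g : mor H) : tgt h = tgt g -> tgt (fob P h) = tgt (fob P g).
Proof.
  intro E. set (p := exist _ (h, g) E : SmorT H).
  assert (A := proj2_sig (fmor P p)). simpl in A. rewrite P_fst, P_snd in A. exact A.
Qed.

(* ... and the value of h^-1 g (it maps blocks into blocks). *)
Lemma P_blk (h g h' g' : mor H) : tgt h = tgt g -> tgt h' = tgt g' ->
  cmp (inv h) g = cmp (inv h') g' ->
  cmp (inv (fob P h)) (fob P g) = cmp (inv (fob P h')) (fob P g').
Proof.
  intros E E' B. set (p := exist _ (h, g) E : SmorT H).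
  set (p' := exist _ (h', g') E' : SmorT H).
  assert (A := proj1 (proj2 HP) p p' B). simpl in A. rewrite !P_fst, !P_snd in A. exact A.
Qed.

Lemma P_id (e : mor H) : is_id e -> is_id (fob P e).
Proof. intro I. apply (proj2 (proj2 (proj2 (proj2 HP)))). exact I. Qed.

Definition idm (x : ob H) : mor H :=
  proj1_sig (constructive_indefinite_description _ (c_idex HC x)).
Lemma idm_spec (x : ob H) : is_id (idm x) /\ src (idm x) = x.
Proof. unfold idm. apply proj2_sig. Qed.

Definition PF : Fun H H' := mkFun H H' (fun x => src (fob P (idm x))) (fob P).

Lemma P_tgt (f : mor H) : tgt (fob P f) = src (fob P (idm (tgt f))).
Proof.
  destruct (idm_spec (tgt f)) as [I S].
  rewrite (@P_pair f (idm (tgt f))); [|rewrite <- (id_st I); auto].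
  symmetry. apply id_st. apply P_id; auto.
Qed.

Lemma P_src (f : mor H) : src (fob P f) = src (fob P (idm (src f))).
Proof.
  destruct (idm_spec (src f)) as [I S].
  assert (B : cmp (inv f) f = cmp (inv (idm (src f))) (idm (src f))).
  { apply id_uniq; [apply inv_l; auto| apply inv_l; auto|]. rewrite !inv_l_src; auto. }
  apply P_blk in B; auto.
  rewrite <- (inv_l_src HG' (fob P f)), B, inv_l_src; auto.
Qed.

(* Functoriality: the pairs (g, g o f) and (1, f) lie in the same block. *)
Lemma P_cmp (g f : mor H) : src g = tgt f -> fob P (cmp g f) = cmp (fob P g) (fob P f).
Proof.
  intro E. destruct (idm_spec (tgt f)) as [I S].
  assert (B : cmp (inv g) (cmp g f) = cmp (inv (idm (tgt f))) f).
  { rewrite cancel_l with (t := f); auto. rewrite inv_id; auto. symmetry. apply id_l; auto. }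
  apply P_blk in B; [|rewrite c_tgt; auto| rewrite <- (id_st I); auto].
  rewrite (inv_id HG' (P_id I)), (id_l (fob P f) (P_id I) (P_tgt f)) in B.
  symmetry. apply cancel_l'; auto. apply P_pair. rewrite c_tgt; auto.
Qed.

Lemma SF_full : exists F : Fun H H', is_functor F /\ feq (SF F) P.
Proof.
  exists PF. split; [split; [|split]|].
  - intro f. simpl. split; [apply P_src|apply P_tgt].
  - intros g f E. apply P_cmp; auto.
  - intros e I. apply P_id; auto.
  - split; [reflexivity|]. intro p. simpl. apply smor_eq; rewrite SF_mor_val; simpl;
    rewrite ?P_fst, ?P_snd; auto; apply P_pair; apply (proj2_sig p).
Qed.
End Full.

Unset Implicit Arguments.

(* Components of a morphism of R~(X): its source, target and block. *)
Notation ra m := (fst (fst (proj1_sig m))).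
Notation rb m := (snd (fst (proj1_sig m))).
Notation rs m := (snd (proj1_sig m)).

Section ThinSchemoid.
Variable X : Smd.
Hypothesis HX : is_tASmd0 X.

Lemma X_semithin : is_semithin X. Proof. apply HX. Qed.
Lemma X_assoc : is_assoc_schemoid X. Proof. apply X_semithin. Qed.
Lemma X_cat : is_cat (scat X). Proof. apply X_assoc. Qed.
Lemma X_nonempty s : exists f, blk X f = s. Proof. apply X_assoc. Qed.
Lemma X_card s t f g : blk X f = blk X g ->
  same_card {ab | factor_rel X s t f ab} {ab | factor_rel X s t g ab}.
Proof. apply X_assoc. Qed.
Lemma X_unital f g : blk X f = blk X g -> is_id f -> is_id g.
Proof. apply X_semithin. Qed.
Lemma X_semi f g : blk X f = blk X g -> src f = src g -> f = g.
Proof. apply X_semithin. Qed.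
Lemma X_Tinv f : is_inverse f (Tmor X f). Proof. apply X_semithin. Qed.
Lemma X_Tblk f g : blk X f = blk X g <-> blk X (Tmor X f) = blk X (Tmor X g).
Proof. apply X_assoc. Qed.
Lemma X_TT f : Tmor X (Tmor X f) = f. Proof. apply X_assoc. Qed.
Lemma X_thin (f g : mor (scat X)) : src f = src g -> tgt f = tgt g -> f = g.
Proof. apply HX. Qed.
Lemma X_conn x : exists! v, base X v /\ conn X x v. Proof. apply HX. Qed.
Lemma X_binj v w e e' : base X v -> base X w -> is_id e -> src e = v ->
     is_id e' -> src e' = w -> blk X e = blk X e' -> v = w.
Proof. apply HX. Qed.
Lemma X_S0 a : S0 X a -> exists v e, base X v /\ is_id e /\ src e = v /\ blk X e = a.
Proof. apply HX. Qed.

Let HC := X_cat.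

Lemma T_src f : src (Tmor X f) = tgt f. Proof. apply X_Tinv. Qed.
Lemma T_tgt f : tgt (Tmor X f) = src f. Proof. apply X_Tinv. Qed.
Lemma T_l f : is_id (cmp (Tmor X f) f). Proof. apply X_Tinv. Qed.
Lemma T_r f : is_id (cmp f (Tmor X f)). Proof. apply X_Tinv. Qed.

Ltac xst := repeat first
  [ rewrite T_src by auto | rewrite T_tgt by auto
  | rewrite c_src by (auto; xst) | rewrite c_tgt by (auto; xst) ]; auto; try congruence.

Lemma factor_transfer s t f g : blk X f = blk X g ->
  (exists ab, factor_rel X s t f ab) -> exists ab, factor_rel X s t g ab.
Proof.
  intros E [ab Hab]. destruct (X_card s t f g E) as [i _].
  exists (proj1_sig (i (exist _ ab Hab))). apply proj2_sig.
Qed.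

(* Dual of semi-thinness (via T): a block has at most one member with a
   given target. *)
Lemma X_semi_tgt f g : blk X f = blk X g -> tgt f = tgt g -> f = g.
Proof.
  intros E T. assert (E' : Tmor X f = Tmor X g).
  { apply X_semi; [apply (proj1 (X_Tblk f g)); auto| rewrite !T_src; auto]. }
  rewrite <- (X_TT f), <- (X_TT g), E'. reflexivity.
Qed.

(* By thinness, every endomorphism is an identity. *)
Lemma X_loop_id (f : mor (scat X)) : src f = tgt f -> is_id f.
Proof.
  intro E. destruct (c_idex HC (src f)) as [e [Ie Se]].
  replace f with e; auto. apply X_thin; auto. rewrite <- (id_st Ie). congruence.
Qed.

(* Morphisms in a common block have their sources in a common identity
   block (transfer the factorisation f = f o 1). *)
Lemma blk_id_src f g e e' : blk X f = blk X g ->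
  is_id e -> src e = src f -> is_id e' -> src e' = src g -> blk X e = blk X e'.
Proof.
  intros B Ie Se Ie' Se'.
  destruct (factor_transfer (blk X f) (blk X e) f g B) as [[a b] [F1 [F2 [F3 F4]]]].
  - exists (f, e). split; [reflexivity|split; [reflexivity|split]]; simpl.
    + rewrite <- (id_st Ie); auto.
    + apply id_r; auto. rewrite <- (id_st Ie); auto.
  - simpl in *. assert (Ib : is_id b) by (apply (X_unital e); auto).
    rewrite (id_r a Ib) in F4 by auto. subst g.
    rewrite <- F2. f_equal. apply id_uniq; auto. rewrite (id_st Ib). congruence.
Qed.

(* The same for targets (transfer f = 1 o f). *)
Lemma blk_id_tgt f g e e' : blk X f = blk X g ->
  is_id e -> src e = tgt f -> is_id e' -> src e' = tgt g -> blk X e = blk X e'.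
Proof.
  intros B Ie Se Ie' Se'.
  destruct (factor_transfer (blk X e) (blk X f) f g B) as [[a b] [F1 [F2 [F3 F4]]]].
  - exists (e, f). split; [reflexivity|split; [reflexivity|split]]; simpl.
    + auto.
    + apply id_l; auto.
  - simpl in *. assert (Ia : is_id a) by (apply (X_unital e); auto).
    rewrite (id_l b Ia) in F4 by auto. subst g.
    rewrite <- F1. f_equal. apply id_uniq; auto. congruence.
Qed.

(* Conversely, a block starting in the identity block of e has a member
   starting at src e (transfer 1 = T g0 o g0). *)
Lemma blk_rep_src e e0 g0 : is_id e -> is_id e0 -> src e0 = src g0 ->
  blk X e = blk X e0 -> exists g, blk X g = blk X g0 /\ src g = src e.
Proof.
  intros Ie Ie0 S B.
  destruct (factor_transfer (blk X (Tmor X g0)) (blk X g0) e0 e (eq_sym B))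
    as [[a b] [F1 [F2 [F3 F4]]]].
  - exists (Tmor X g0, g0). split; [reflexivity|split; [reflexivity|split]]; simpl.
    + apply T_src.
    + apply id_uniq; auto; [apply T_l|]. rewrite S. xst.
  - simpl in *. exists b. split; auto. rewrite <- F4. xst.
Qed.

(* ... and a member ending at src e (transfer 1 = g0 o T g0). *)
Lemma blk_rep_tgt e e0 g0 : is_id e -> is_id e0 -> src e0 = tgt g0 ->
  blk X e = blk X e0 -> exists g, blk X g = blk X g0 /\ tgt g = src e.
Proof.
  intros Ie Ie0 S B.
  destruct (factor_transfer (blk X g0) (blk X (Tmor X g0)) e0 e (eq_sym B))
    as [[a b] [F1 [F2 [F3 F4]]]].
  - exists (g0, Tmor X g0). split; [reflexivity|split; [reflexivity|split]]; simpl.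
    + rewrite T_tgt; auto.
    + apply id_uniq; auto; [apply T_r|]. rewrite S. xst.
  - simpl in *. exists a. split; auto. rewrite (id_st Ie). rewrite <- F4. xst.
Qed.

(* The block of a composite depends only on the blocks of the factors
   (transfer f = T g o (g o f) along the block of f). *)
Lemma blk_cmp_compat a b g f : blk X a = blk X g -> blk X b = blk X f ->
  src a = tgt b -> src g = tgt f -> blk X (cmp a b) = blk X (cmp g f).
Proof.
  intros Ba Bb Sa Sg.
  destruct (factor_transfer (blk X (Tmor X g)) (blk X (cmp g f)) f b (eq_sym Bb))
    as [[c d] [F1 [F2 [F3 F4]]]].
  - exists (Tmor X g, cmp g f). split; [reflexivity|split; [reflexivity|split]]; simpl.
    + xst.
    + rewrite c_assoc; auto; [|xst]. apply id_l; [apply T_l|]. xst.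
  - simpl in *.
    assert (Ec : c = Tmor X a).
    { apply X_semi_tgt.
      - rewrite F1. apply (proj1 (X_Tblk _ _)). auto.
      - rewrite T_tgt. rewrite Sa, <- F4. xst. }
    subst c. rewrite <- F4. rewrite c_assoc; auto; [|xst].
    rewrite id_l; auto; [apply T_r|]. xst. rewrite <- F3, T_src; auto.
Qed.

Lemma X_conn_mor x y : conn X x y -> exists f, src f = x /\ tgt f = y.
Proof.
  induction 1.
  - auto.
  - destruct (c_idex HC x) as [e [Ie Se]]. exists e. split; auto.
    rewrite <- (id_st Ie); auto.
  - destruct IHclos_refl_sym_trans as [f [S T]]. exists (Tmor X f). split; xst.
  - destruct IHclos_refl_sym_trans1 as [f [S T]], IHclos_refl_sym_trans2 as [g [S' T']].
    exists (cmp g f). split; xst.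
Qed.

Lemma X_mor_conn (f : mor (scat X)) : conn X (src f) (tgt f).
Proof. apply rst_step. exists f; auto. Qed.

(* T is the identity on objects, since T(1_x) = 1_x^-1 starts at x. *)
Lemma X_Tob x : Tob X x = x.
Proof.
  destruct (c_idex HC x) as [e [Ie Se]].
  assert (A := proj1 (proj1 (proj2 (proj2 X_assoc)) e)).
  rewrite T_src in A. rewrite <- (id_st Ie), Se in A. auto.
Qed.

Definition xid (x : ob (scat X)) : mor (scat X) :=
  proj1_sig (constructive_indefinite_description _ (c_idex HC x)).
Lemma xid_spec x : is_id (xid x) /\ src (xid x) = x.
Proof. unfold xid. destruct (constructive_indefinite_description _ _) as [e He]. exact He. Qed.
Lemma xid_id x : is_id (xid x). Proof. apply xid_spec. Qed.
Lemma xid_src x : src (xid x) = x. Proof. apply xid_spec. Qed.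
Lemma xid_tgt x : tgt (xid x) = x. Proof. rewrite <- (id_st (xid_id x)). apply xid_src. Qed.
Lemma xid_uniq e x : is_id e -> src e = x -> e = xid x.
Proof. intros I S. apply id_uniq; auto. apply xid_id. rewrite xid_src; auto. Qed.
Lemma xid_l f : cmp (xid (tgt f)) f = f.
Proof. apply id_l. apply xid_id. rewrite xid_src; auto. Qed.
Lemma xid_r f : cmp f (xid (src f)) = f.
Proof. apply id_r. apply xid_id. rewrite xid_tgt; auto. Qed.

Lemma S0_id a : S0 X a -> forall b, blk X b = a -> is_id b.
Proof. intros [u [Bu Iu]] b Bb. apply (X_unital u); auto. congruence. Qed.

Lemma inS_fwd a b s f : S0 X a -> S0 X b -> inS X a b s -> blk X f = s ->
  blk X (xid (src f)) = a /\ blk X (xid (tgt f)) = b.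
Proof.
  intros Sa Sb [[f0 [B0 [[x y] [[F1 [F2 [F3 F4]]] _]]]]
                [f1 [B1 [[x' y'] [[G1 [G2 [G3 G4]]] _]]]]] Bf.
  simpl in *. split.
  - assert (Iy : is_id y) by (apply (S0_id a); auto).
    rewrite (id_r x Iy) in F4 by auto. subst x.
    rewrite <- F2, (xid_uniq y (src f0)); auto; [|rewrite (id_st Iy); auto].
    symmetry; apply (blk_id_src f0 f (xid (src f0)) (xid (src f)));
      [congruence| apply xid_id| apply xid_src| apply xid_id| apply xid_src].
  - assert (Ix : is_id x') by (apply (S0_id b); auto).
    rewrite (id_l y' Ix) in G4 by auto. subst y'.
    rewrite <- G1, (xid_uniq x' (tgt f1)); auto.
    symmetry; apply (blk_id_tgt f1 f (xid (tgt f1)) (xid (tgt f)));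
      [congruence| apply xid_id| apply xid_src| apply xid_id| apply xid_src].
Qed.

Lemma inS_bwd a b s f : S0 X a -> S0 X b -> blk X f = s ->
  blk X (xid (src f)) = a -> blk X (xid (tgt f)) = b -> inS X a b s.
Proof.
  intros Sa Sb Bf Ea Eb. split.
  - exists f. split; auto. exists (f, xid (src f)). split.
    + split; [auto|split; [auto|split]]; simpl; [rewrite xid_tgt; auto| apply xid_r].
    + intros [x y] [F1 [F2 [F3 F4]]]. simpl in *.
      assert (Iy : is_id y) by (apply (S0_id a); auto).
      rewrite (id_r x Iy) in F4 by auto. subst x.
      f_equal. symmetry. apply xid_uniq; auto. rewrite (id_st Iy); auto.
  - exists f. split; auto. exists (xid (tgt f), f). split.
    + split; [auto|split; [auto|split]]; simpl; [rewrite xid_src; auto| apply xid_l].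
    + intros [x y] [F1 [F2 [F3 F4]]]. simpl in *.
      assert (Ix : is_id x) by (apply (S0_id b); auto).
      rewrite (id_l y Ix) in F4 by auto. subst y.
      f_equal. symmetry. apply xid_uniq; auto.
Qed.

(* R~(X): objects are identity blocks, morphisms a -> b are blocks of _a S_b. *)
Lemma R_eq (m m' : RmorT X) : proj1_sig m = proj1_sig m' -> m = m'.
Proof. apply sig_ext. Qed.
Lemma Rob_eq (a a' : RobT X) : proj1_sig a = proj1_sig a' -> a = a'.
Proof. apply sig_ext. Qed.

Lemma m_S0a (m : RmorT X) : S0 X (ra m). Proof. apply (proj2_sig m). Qed.
Lemma m_S0b (m : RmorT X) : S0 X (rb m). Proof. apply (proj2_sig m). Qed.

Lemma m_fwd (m : RmorT X) f : blk X f = rs m ->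
  blk X (xid (src f)) = ra m /\ blk X (xid (tgt f)) = rb m.
Proof.
  intro B. apply (inS_fwd _ _ (rs m)); auto; [apply m_S0a|apply m_S0b|apply (proj2_sig m)].
Qed.

Lemma m_pick (m : RmorT X) : exists f, blk X f = rs m.
Proof. apply X_nonempty. Qed.

Lemma m_ext_src (t : RmorT X) x : blk X (xid x) = ra t ->
  exists g, blk X g = rs t /\ src g = x.
Proof.
  intro E. destruct (m_pick t) as [g0 Bg0].
  destruct (blk_rep_src (xid x) (xid (src g0)) g0) as [g [Bg Sg]];
    [apply xid_id|apply xid_id|apply xid_src| |].
  - rewrite E. symmetry. apply (m_fwd t g0 Bg0).
  - exists g. split; [congruence|rewrite Sg; apply xid_src].
Qed.

Lemma m_ext_tgt (t : RmorT X) x : blk X (xid x) = rb t ->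
  exists g, blk X g = rs t /\ tgt g = x.
Proof.
  intro E. destruct (m_pick t) as [g0 Bg0].
  destruct (blk_rep_tgt (xid x) (xid (tgt g0)) g0) as [g [Bg Sg]];
    [apply xid_id|apply xid_id|apply xid_src| |].
  - rewrite E. symmetry. apply (m_fwd t g0 Bg0).
  - exists g. split; [congruence|rewrite Sg; apply xid_src].
Qed.

Lemma pone_cmp f g : src g = tgt f -> pone X (blk X g) (blk X f) (blk X (cmp g f)).
Proof.
  intro Sg. exists (cmp g f). split; auto. exists (g, f). split.
  - split; [auto|split; [auto|split; auto]].
  - intros [a b] [F1 [F2 [F3 F4]]]. simpl in *.
    assert (Eb : b = f).
    { apply X_semi; [congruence|]. rewrite <- (c_src HC a b F3), F4. xst. }
    subst b. assert (Ea : a = g) by (apply X_semi; congruence).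
    subst; auto.
Qed.

Lemma R_cmp_spec (t s : RmorT X) f g : blk X f = rs s -> blk X g = rs t ->
  src g = tgt f -> proj1_sig (@cmp (RC X) t s) = (ra s, rb t, blk X (cmp g f)).
Proof.
  intros Bf Bg Sg.
  set (P := fun m : RmorT X => ra m = ra s /\ rb m = rb t /\ pone X (rs t) (rs s) (rs m)).
  assert (Ex : exists m, P m).
  { assert (I : inS X (ra s) (rb t) (blk X (cmp g f))).
    { apply inS_bwd with (f := cmp g f); auto; [apply m_S0a|apply m_S0b| |].
      - rewrite c_src; auto. apply (m_fwd s f Bf).
      - rewrite c_tgt; auto. apply (m_fwd t g Bg). }
    exists (exist _ (ra s, rb t, blk X (cmp g f)) (conj (m_S0a s) (conj (m_S0b t) I))).
    split; [reflexivity|split; [reflexivity|]]. simpl.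
    rewrite <- Bf, <- Bg. apply pone_cmp; auto. }
  assert (Hc := epsilon_spec (inhabits s) P Ex).
  change (P (@cmp (RC X) t s)) in Hc.
  destruct Hc as [H1 [H2 [f' [Bf' [[a b] [[F1 [F2 [F3 F4]]] _]]]]]]. simpl in *.
  subst f'. rewrite (surjective_pairing (proj1_sig (R_cmp t s))),
    (surjective_pairing (fst (proj1_sig (R_cmp t s)))). rewrite H1, H2, <- Bf'.
  f_equal. apply blk_cmp_compat; congruence.
Qed.

Lemma R_cmp_ex (t s : RmorT X) : ra t = rb s ->
  exists f g, blk X f = rs s /\ blk X g = rs t /\ src g = tgt f /\
  proj1_sig (@cmp (RC X) t s) = (ra s, rb t, blk X (cmp g f)).
Proof.
  intro E. destruct (m_pick s) as [f Bf].
  destruct (m_ext_src t (tgt f)) as [g [Bg Sg]].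
  - rewrite E. apply (m_fwd s f Bf).
  - exists f, g. repeat split; auto. apply R_cmp_spec; auto.
Qed.

Lemma RC_st (g f : RmorT X) : @src (RC X) g = @tgt (RC X) f <-> ra g = rb f.
Proof. split; [apply (f_equal (@proj1_sig _ _))|intro E; apply Rob_eq; exact E]. Qed.
Lemma RC_ss (g f : RmorT X) : @src (RC X) g = @src (RC X) f <-> ra g = ra f.
Proof. split; [apply (f_equal (@proj1_sig _ _))|intro E; apply Rob_eq; exact E]. Qed.
Lemma RC_tt (g f : RmorT X) : @tgt (RC X) g = @tgt (RC X) f <-> rb g = rb f.
Proof. split; [apply (f_equal (@proj1_sig _ _))|intro E; apply Rob_eq; exact E]. Qed.

Lemma inS_refl a : S0 X a -> inS X a a a.
Proof.
  intro Sa. destruct Sa as [u [Bu Iu]].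
  assert (Eu : u = xid (src u)) by (apply xid_uniq; auto).
  apply inS_bwd with (f := u); auto; try (exists u; auto).
  - rewrite <- Eu; auto.
  - rewrite <- (id_st Iu), <- Eu; auto.
Qed.

Definition idR (a : RobT X) : RmorT X :=
  exist _ (proj1_sig a, proj1_sig a, proj1_sig a)
    (conj (proj2_sig a) (conj (proj2_sig a) (inS_refl _ (proj2_sig a)))).

Lemma idR_is_id a : @is_id (RC X) (idR a).
Proof.
  split; [apply Rob_eq; reflexivity|split].
  - intros f Ef. symmetry in Ef. apply RC_st in Ef. simpl in Ef. apply R_eq.
    destruct (m_pick f) as [f0 B0].
    rewrite (R_cmp_spec (idR a) f f0 (xid (tgt f0))); auto; [| |apply xid_src].
    + rewrite xid_l, B0. simpl. rewrite Ef, <- !surjective_pairing. reflexivity.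
    + simpl. rewrite Ef. apply (m_fwd f f0 B0).
  - intros f Ef. apply RC_st in Ef. simpl in Ef. apply R_eq.
    destruct (m_pick f) as [f0 B0].
    rewrite (R_cmp_spec f (idR a) (xid (src f0)) f0); auto; [| |rewrite xid_tgt; auto].
    + rewrite xid_r, B0. simpl. rewrite <- Ef, <- !surjective_pairing. reflexivity.
    + simpl. rewrite <- Ef. apply (m_fwd f f0 B0).
Qed.

Lemma RC_id_of (m : RmorT X) : ra m = rb m -> rs m = ra m -> @is_id (RC X) m.
Proof.
  intros E1 E2. replace m with (idR (R_src m)); [apply idR_is_id|].
  apply R_eq. simpl. symmetry.
  rewrite (surjective_pairing (proj1_sig m)), (surjective_pairing (fst (proj1_sig m))).
  simpl. rewrite E2, <- E1. reflexivity.
Qed.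

Lemma RC_cat : is_cat (RC X).
Proof.
  split; [|split].
  - intros g f E. apply RC_st in E.
    destruct (R_cmp_ex g f E) as [f0 [g0 [B1 [B2 [S V]]]]].
    split; [apply RC_ss| apply RC_tt]; rewrite V; reflexivity.
  - intros h g f E1 E2. apply RC_st in E1. apply RC_st in E2. apply R_eq.
    destruct (R_cmp_ex g f E2) as [f0 [g0 [B1 [B2 [S V]]]]].
    destruct (m_ext_src h (tgt g0)) as [h0 [B3 S3]].
    { rewrite E1. apply (m_fwd g g0 B2). }
    assert (Vhg : proj1_sig (@cmp (RC X) h g) = (ra g, rb h, blk X (cmp h0 g0)))
      by (apply R_cmp_spec; auto).
    rewrite (R_cmp_spec h (@cmp (RC X) g f) (cmp g0 f0) h0); auto;
      [|rewrite V; reflexivity| xst].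
    rewrite (R_cmp_spec (@cmp (RC X) h g) f f0 (cmp h0 g0)); auto;
      [| rewrite Vhg; reflexivity | xst].
    rewrite Vhg, V. simpl. rewrite c_assoc; auto.
  - intro x. exists (idR x). split; [apply idR_is_id|apply Rob_eq; reflexivity].
Qed.

Lemma R_rev_inS (m : RmorT X) f0 : blk X f0 = rs m ->
  inS X (rb m) (ra m) (blk X (Tmor X f0)).
Proof.
  intro B0. destruct (m_fwd m f0 B0) as [Ea Eb].
  apply inS_bwd with (f := Tmor X f0); auto; [apply m_S0b|apply m_S0a| |].
  - rewrite T_src; auto.
  - rewrite T_tgt; auto.
Qed.

Definition R_rev (m : RmorT X) f0 (B0 : blk X f0 = rs m) : RmorT X :=
  exist _ (rb m, ra m, blk X (Tmor X f0)) (conj (m_S0b m) (conj (m_S0a m) (R_rev_inS m f0 B0))).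

Lemma R_rev_inverse (m : RmorT X) f0 (B0 : blk X f0 = rs m) :
  @is_inverse (RC X) m (R_rev m f0 B0).
Proof.
  destruct (m_fwd m f0 B0) as [Ea Eb].
  split; [apply Rob_eq; reflexivity|split; [apply Rob_eq; reflexivity|split]].
  - apply RC_id_of.
    + rewrite (R_cmp_spec _ m f0 (Tmor X f0)); auto. rewrite T_src; auto.
    + rewrite (R_cmp_spec _ m f0 (Tmor X f0)); auto; [|rewrite T_src; auto]. simpl.
      rewrite <- Ea. f_equal. apply xid_uniq; [apply T_l|]. xst.
  - apply RC_id_of.
    + rewrite (R_cmp_spec m _ (Tmor X f0) f0); auto. rewrite T_tgt; auto.
    + rewrite (R_cmp_spec m _ (Tmor X f0) f0); auto; [|rewrite T_tgt; auto]. simpl.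
      rewrite <- Eb. f_equal. apply xid_uniq; [apply T_r|]. xst.
Qed.

Lemma RC_gpd : is_groupoid (RC X).
Proof.
  split; [apply RC_cat|]. intro m.
  destruct (m_pick m) as [f0 B0]. exists (R_rev m f0 B0). apply R_rev_inverse.
Qed.

Lemma RC_inv_val (m : RmorT X) f0 : blk X f0 = rs m ->
  proj1_sig (@inv (RC X) m) = (rb m, ra m, blk X (Tmor X f0)).
Proof.
  intro B0.
  rewrite (inverse_uniq RC_gpd (inv_spec RC_gpd m) (R_rev_inverse m f0 B0)).
  reflexivity.
Qed.

Lemma RC_id_val (m : RmorT X) : @is_id (RC X) m -> rb m = ra m /\ rs m = ra m.
Proof.
  intro I. assert (E : m = idR (R_src m)).
  { apply (@id_uniq (RC X)); auto; [apply idR_is_id|]. apply Rob_eq. reflexivity. }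
  rewrite E. simpl. auto.
Qed.

Lemma SR_blk_val (p : SmorT (RC X)) gs gt :
  blk X gs = rs (snd (proj1_sig p)) -> blk X gt = rs (fst (proj1_sig p)) ->
  tgt gs = tgt gt ->
  proj1_sig (blk (SH (RC X)) p) =
    (ra (snd (proj1_sig p)), ra (fst (proj1_sig p)), blk X (cmp (Tmor X gt) gs)).
Proof.
  destruct p as [[t s] pts]; simpl. intros Bs Bt E.
  assert (V := RC_inv_val t gt Bt).
  change (R_cmp (@inv (RC X) t) s) with (@cmp (RC X) (@inv (RC X) t) s).
  rewrite (R_cmp_spec (@inv (RC X) t) s gs (Tmor X gt)); auto;
    [| rewrite V; auto | rewrite T_src; auto].
  rewrite V. reflexivity.
Qed.
End ThinSchemoid.

(* An object m of S~(R~(X)) is a block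
   from ra m to rb m; eps_X m is the source of its unique representative
   ending at the base point of the component rb m.  A morphism (t, s) goes to
   the unique morphism of X between the images of s and t. *)
Lemma rm_inh (X : Smd) (m : RmorT X) : inhabited (ob (scat X)).
Proof. destruct (proj1 (proj2_sig m)) as [f _]. exact (inhabits (src f)). Qed.
Lemma rm_inhm (X : Smd) (m : RmorT X) : inhabited (mor (scat X)).
Proof. destruct (proj1 (proj2_sig m)) as [f _]. exact (inhabits f). Qed.

Definition epsP (X : Smd) (m : RmorT X) (x : ob (scat X)) : Prop :=
  exists g, blk X g = rs m /\ src g = x /\ base X (tgt g) /\
    exists e, is_id e /\ src e = tgt g /\ blk X e = rb m.
Definition eps_ob (X : Smd) (m : RmorT X) : ob (scat X) := epsilon (rm_inh X m) (epsP X m).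
Definition eps_mor (X : Smd) (p : SmorT (RC X)) : mor (scat X) :=
  epsilon (rm_inhm X (fst (proj1_sig p)))
    (fun f => src f = eps_ob X (snd (proj1_sig p)) /\ tgt f = eps_ob X (fst (proj1_sig p))).
Definition epsF (X : Smd) : Fun (scat (SH (RC X))) (scat X) :=
  mkFun (SC (RC X)) (scat X) (eps_ob X) (eps_mor X).

Section Counit.
Variable X : Smd.
Hypothesis HX : is_tASmd0 X.
Let HC := X_cat X HX.

Lemma base_blk_uniq v w : base X v -> base X w ->
  blk X (xid X HX v) = blk X (xid X HX w) -> v = w.
Proof.
  intros Bv Bw E. apply (X_binj X HX _ _ (xid X HX v) (xid X HX w)); auto;
    try apply xid_id; apply xid_src.
Qed.

Lemma eps_ob_spec (m : RmorT X) : exists g, blk X g = rs m /\ src g = eps_ob X m /\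
  base X (tgt g) /\ blk X (xid X HX (tgt g)) = rb m.
Proof.
  assert (Ex : exists x, epsP X m x).
  { destruct (X_S0 X HX (rb m) (m_S0b X m)) as [v [e [Bv [Ie [Se Be]]]]].
    destruct (m_ext_tgt X HX m v) as [g [Bg Tg]].
    - rewrite <- (xid_uniq X HX e v); auto.
    - exists (src g), g. repeat split; auto; [rewrite Tg; auto|].
      exists e. split; [auto|split; [congruence|auto]]. }
  destruct (epsilon_spec (rm_inh X m) (epsP X m) Ex) as [g [Bg [Sg [Bt [e [Ie [Se Be]]]]]]].
  exists g. repeat split; auto. rewrite <- (xid_uniq X HX e (tgt g)); auto.
Qed.

Lemma eps_ob_uniq (m : RmorT X) g : blk X g = rs m -> base X (tgt g) ->
  blk X (xid X HX (tgt g)) = rb m -> src g = eps_ob X m.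
Proof.
  intros Bg Bt Be. destruct (eps_ob_spec m) as [g' [Bg' [Sg' [Bt' Be']]]].
  assert (Et : tgt g = tgt g') by (apply base_blk_uniq; congruence).
  rewrite <- Sg'. f_equal. apply (X_semi_tgt X HX); auto. congruence.
Qed.

(* The chosen representatives of the two ends of a pair (t, s) end at the
   same base point, so that t^-1 o s is represented by T gt o gs. *)
Lemma eps_pair_spec (p : SmorT (RC X)) : exists gs gt,
  blk X gs = rs (snd (proj1_sig p)) /\ src gs = eps_ob X (snd (proj1_sig p)) /\
  blk X gt = rs (fst (proj1_sig p)) /\ src gt = eps_ob X (fst (proj1_sig p)) /\
  tgt gs = tgt gt.
Proof.
  destruct (eps_ob_spec (snd (proj1_sig p))) as [gs [Bs [Ss [Ts Es]]]].
  destruct (eps_ob_spec (fst (proj1_sig p))) as [gt [Bt [St [Tt Et]]]].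
  assert (E : rb (fst (proj1_sig p)) = rb (snd (proj1_sig p))).
  { apply (RC_tt X). apply (proj2_sig p). }
  exists gs, gt. repeat split; auto. apply base_blk_uniq; congruence.
Qed.

Lemma eps_mor_spec (p : SmorT (RC X)) : src (eps_mor X p) = eps_ob X (snd (proj1_sig p)) /\
  tgt (eps_mor X p) = eps_ob X (fst (proj1_sig p)).
Proof.
  unfold eps_mor. apply epsilon_spec.
  destruct (eps_pair_spec p) as [gs [gt [Bs [Ss [Bt [St Eq]]]]]].
  exists (cmp (Tmor X gt) gs).
  split; rewrite ?c_src, ?c_tgt, ?T_src, ?T_tgt; auto; rewrite T_src; auto.
Qed.

(* By thinness, eps_mor p is the only morphism with its source and target. *)
Lemma eps_mor_char (p : SmorT (RC X)) f : src f = eps_ob X (snd (proj1_sig p)) ->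
  tgt f = eps_ob X (fst (proj1_sig p)) -> eps_mor X p = f.
Proof. destruct (eps_mor_spec p). intros. apply (X_thin X HX); congruence. Qed.

Lemma eps_blk (p : SmorT (RC X)) : blk X (eps_mor X p) = rs (blk (SH (RC X)) p).
Proof.
  destruct (eps_pair_spec p) as [gs [gt [Bs [Ss [Bt [St Eq]]]]]].
  rewrite (SR_blk_val X HX p gs gt Bs Bt Eq). simpl. f_equal.
  apply eps_mor_char.
  - rewrite c_src; auto; rewrite T_src; auto.
  - rewrite c_tgt, T_tgt; auto; rewrite T_src; auto.
Qed.

Lemma eps_functor : is_functor (epsF X).
Proof.
  split; [|split].
  - intro f. apply eps_mor_spec.
  - intros g f E. simpl in *.
    destruct (eps_mor_spec g) as [A1 A2], (eps_mor_spec f) as [A3 A4].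
    apply eps_mor_char; rewrite S_cmp_val; auto; simpl.
    + rewrite (c_src HC); [exact A3|rewrite A1, A4; f_equal; exact E].
    + rewrite (c_tgt HC); [exact A2|rewrite A1, A4; f_equal; exact E].
  - intros e I. apply SC_is_id in I. simpl. apply (X_loop_id X HX).
    destruct (eps_mor_spec e) as [A1 A2]. rewrite A1, A2, I. reflexivity.
Qed.

Lemma eps_tmor : is_tmor (SH (RC X)) X (epsF X).
Proof.
  split; [exact eps_functor|split; [|split; [|split]]].
  - intros f g E. simpl. rewrite !eps_blk. rewrite E. reflexivity.
  - intro x. simpl. symmetry. apply (X_Tob X HX).
  - intro f. simpl. destruct (eps_mor_spec f) as [A1 A2].
    apply eps_mor_char; simpl; [rewrite T_src|rewrite T_tgt]; auto.
  - intros m Bm. simpl in *. destruct (RC_id_val X HX m Bm) as [E1 E2].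
    destruct (eps_ob_spec m) as [g [Bg [Sg [Tg Eg]]]].
    assert (Ig : is_id g) by (apply (S0_id X HX (rb m) (m_S0b X m)); congruence).
    rewrite <- Sg, (id_st Ig). exact Tg.
Qed.
End Counit.

(* The inverse Q_X of the counit: an object x goes to the block of the
   morphism mx x from x to the base point vx x of its component. *)
Section CounitInverse.
Variable X : Smd.
Hypothesis HX : is_tASmd0 X.
Let HC := X_cat X HX.

Lemma X_vx x : exists v, base X v /\ conn X x v.
Proof. destruct (X_conn X HX x) as [v [Hv _]]. eauto. Qed.
Definition vx x := proj1_sig (constructive_indefinite_description _ (X_vx x)).
Lemma vx_spec x : base X (vx x) /\ conn X x (vx x).
Proof. unfold vx. destruct (constructive_indefinite_description _ _) as [v Hv]. exact Hv. Qed.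
Lemma v_uniq x v : base X v -> conn X x v -> v = vx x.
Proof.
  intros B C. destruct (X_conn X HX x) as [v0 [_ U]].
  rewrite <- (U v (conj B C)), <- (U (vx x) (vx_spec x)). reflexivity.
Qed.
Lemma vx_mor (f : mor (scat X)) : vx (src f) = vx (tgt f).
Proof.
  symmetry. apply v_uniq; [apply vx_spec|].
  apply rst_trans with (tgt f); [apply X_mor_conn|apply vx_spec].
Qed.

Lemma X_mx x : exists f, src f = x /\ tgt f = vx x.
Proof. apply (X_conn_mor X HX). apply vx_spec. Qed.
Definition mx x := proj1_sig (constructive_indefinite_description _ (X_mx x)).
Lemma mx_spec x : src (mx x) = x /\ tgt (mx x) = vx x.
Proof. unfold mx. destruct (constructive_indefinite_description _ _) as [v Hv]. exact Hv. Qed.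

Lemma S0_xid y : S0 X (blk X (xid X HX y)).
Proof. exists (xid X HX y). split; auto. apply xid_id. Qed.

Lemma Q_inS x : inS X (blk X (xid X HX x)) (blk X (xid X HX (vx x))) (blk X (mx x)).
Proof.
  destruct (mx_spec x) as [S T].
  apply (inS_bwd X HX) with (f := mx x); auto; try apply S0_xid; congruence.
Qed.

Definition Q_ob x : RmorT X :=
  exist _ (blk X (xid X HX x), blk X (xid X HX (vx x)), blk X (mx x))
    (conj (S0_xid x) (conj (S0_xid (vx x)) (Q_inS x))).

Lemma Q_pair (f : mor (scat X)) : @tgt (RC X) (Q_ob (tgt f)) = @tgt (RC X) (Q_ob (src f)).
Proof. apply Rob_eq. simpl. rewrite vx_mor. reflexivity. Qed.

Definition Q_mor (f : mor (scat X)) : SmorT (RC X) :=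
  exist _ (Q_ob (tgt f), Q_ob (src f)) (Q_pair f).
Definition QF : Fun (scat X) (scat (SH (RC X))) := mkFun (scat X) (SC (RC X)) Q_ob Q_mor.

Lemma Q_blk (f : mor (scat X)) : proj1_sig (blk (SH (RC X)) (Q_mor f)) =
  (blk X (xid X HX (src f)), blk X (xid X HX (tgt f)), blk X f).
Proof.
  destruct (mx_spec (src f)) as [S1 T1], (mx_spec (tgt f)) as [S2 T2].
  assert (Sg : tgt (mx (src f)) = tgt (mx (tgt f))) by (rewrite T1, T2, vx_mor; reflexivity).
  rewrite (SR_blk_val X HX (Q_mor f) (mx (src f)) (mx (tgt f))); auto.
  simpl. f_equal. apply f_equal. apply (X_thin X HX).
  - rewrite c_src; auto; rewrite T_src; auto.
  - rewrite c_tgt; auto; [rewrite T_tgt; auto|rewrite T_src; auto].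
Qed.

Lemma Q_tmor : is_tmor X (SH (RC X)) QF.
Proof.
  split; [split; [|split]|split; [|split; [|split]]].
  - intro f. split; reflexivity.
  - intros g f E. assert (E' : snd (proj1_sig (Q_mor g)) = fst (proj1_sig (Q_mor f))).
    { simpl. rewrite E. reflexivity. }
    apply smor_eq; simpl; unfold S_cmp;
      destruct (excluded_middle_informative _) as [e|n]; try contradiction;
      simpl; [rewrite c_tgt|rewrite c_src]; auto.
  - intros e I. apply SC_is_id. simpl. rewrite (id_st I). reflexivity.
  - intros f g E. apply R_eq. rewrite !Q_blk, E.
    rewrite (blk_id_src X HX f g (xid X HX (src f)) (xid X HX (src g)));
      try apply xid_id; try apply xid_src; auto.
    rewrite (blk_id_tgt X HX f g (xid X HX (tgt f)) (xid X HX (tgt g)));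
      try apply xid_id; try apply xid_src; auto.
  - intro x. simpl. rewrite X_Tob; auto.
  - intro f. apply smor_eq; simpl; [rewrite T_tgt|rewrite T_src]; auto.
  - intros x Bx. simpl. apply (RC_id_of X HX); auto; simpl.
    + rewrite <- (v_uniq x x); auto. apply rst_refl.
    + destruct (mx_spec x) as [S T]. f_equal. apply X_thin; auto.
      * rewrite xid_src; auto.
      * rewrite xid_tgt; auto. rewrite T. symmetry. apply v_uniq; auto. apply rst_refl.
Qed.

Lemma eps_Q x : eps_ob X (Q_ob x) = x.
Proof.
  destruct (mx_spec x) as [S T]. rewrite <- S at 2. symmetry.
  apply (eps_ob_uniq X HX); auto; simpl; rewrite ?T; auto. apply vx_spec.
Qed.

Lemma Q_eps (m : RmorT X) : Q_ob (eps_ob X m) = m.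
Proof.
  apply R_eq. destruct (eps_ob_spec X HX m) as [g [Bg [Sg [Tg Eg]]]].
  rewrite <- Sg. simpl.
  assert (Ev : vx (src g) = tgt g) by (symmetry; apply v_uniq; auto; apply X_mor_conn).
  assert (Em : mx (src g) = g).
  { destruct (mx_spec (src g)) as [S T]. apply X_thin; auto. congruence. }
  rewrite Ev, Em. destruct (m_fwd X HX m g Bg) as [E1 E2]. rewrite E1, E2, Bg.
  rewrite <- !surjective_pairing. reflexivity.
Qed.

Lemma eps_Q_mor f : eps_mor X (Q_mor f) = f.
Proof. apply (eps_mor_char X HX); simpl; rewrite eps_Q; reflexivity. Qed.

Lemma Q_eps_mor p : Q_mor (eps_mor X p) = p.
Proof.
  destruct (eps_mor_spec X HX p) as [A1 A2].
  apply smor_eq; simpl; [rewrite A2|rewrite A1]; apply Q_eps.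
Qed.

Lemma eps_Q_iso : feq (fcomp QF (epsF X)) (fid _) /\ feq (fcomp (epsF X) QF) (fid _).
Proof.
  split; split.
  - intro m; apply Q_eps.
  - intro p; apply Q_eps_mor.
  - intro x; apply eps_Q.
  - intro f; apply eps_Q_mor.
Qed.
End CounitInverse.

Lemma tmor_comp (X Y Z : Smd) (F : Fun (scat X) (scat Y)) (G : Fun (scat Y) (scat Z)) :
  is_tmor X Y F -> is_tmor Y Z G -> is_tmor X Z (fcomp G F).
Proof.
  intros [F1 [F2 [F3 [F4 F5]]]] [G1 [G2 [G3 [G4 G5]]]].
  split; [apply fcomp_functor; auto|split; [|split; [|split]]]; simpl.
  - intros f g E. apply G2, F2, E.
  - intro x. rewrite F3, G3. reflexivity.
  - intro f. rewrite F4, G4. reflexivity.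
  - intros x B. apply G5, F5, B.
Qed.

Section RFunctor.
Variables X Y : Smd.
Hypothesis HX : is_tASmd0 X.
Hypothesis HY : is_tASmd0 Y.
Variable F : Fun (scat X) (scat Y).
Hypothesis HF : is_tmor X Y F.

Lemma F_src f : src (fmor F f) = fob F (src f). Proof. apply (proj1 (proj1 HF) f). Qed.
Lemma F_tgt f : tgt (fmor F f) = fob F (tgt f). Proof. apply (proj1 (proj1 HF) f). Qed.
Lemma F_id e : is_id e -> is_id (fmor F e). Proof. apply (proj1 HF). Qed.
Lemma F_cmp g f : src g = tgt f -> fmor F (cmp g f) = cmp (fmor F g) (fmor F f).
Proof. apply (proj1 HF). Qed.
Lemma F_blk f g : blk X f = blk X g -> blk Y (fmor F f) = blk Y (fmor F g).
Proof. apply (proj1 (proj2 HF)). Qed.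
Lemma F_base x : base X x -> base Y (fob F x). Proof. apply HF. Qed.
Lemma F_xid x : fmor F (xid X HX x) = xid Y HY (fob F x).
Proof. apply xid_uniq; [apply F_id, xid_id|]. rewrite F_src, xid_src. reflexivity. Qed.

Definition pickS (a : RobT X) : mor (scat X) :=
  proj1_sig (constructive_indefinite_description _ (proj2_sig a)).
Lemma pickS_spec a : blk X (pickS a) = proj1_sig a /\ is_id (pickS a).
Proof. unfold pickS. destruct (constructive_indefinite_description _ _) as [f Hf]. exact Hf. Qed.
Definition pickM (m : RmorT X) : mor (scat X) :=
  proj1_sig (constructive_indefinite_description _ (m_pick X HX m)).
Lemma pickM_spec m : blk X (pickM m) = rs m.
Proof. unfold pickM. destruct (constructive_indefinite_description _ _) as [f Hf]. exact Hf. Qed.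

Lemma Gob_S0 a : S0 Y (blk Y (fmor F (pickS a))).
Proof. exists (fmor F (pickS a)). split; auto. apply F_id, pickS_spec. Qed.
Definition Gob (a : RobT X) : RobT Y := exist _ _ (Gob_S0 a).

Lemma Gob_blk (a : RobT X) f : blk X f = proj1_sig a -> proj1_sig (Gob a) = blk Y (fmor F f).
Proof. intro B. simpl. apply F_blk. rewrite B. apply pickS_spec. Qed.

Lemma Gmor_inS (m : RmorT X) :
  inS Y (proj1_sig (Gob (R_src m))) (proj1_sig (Gob (R_tgt m))) (blk Y (fmor F (pickM m))).
Proof.
  destruct (m_fwd X HX m (pickM m) (pickM_spec m)) as [E1 E2].
  apply (inS_bwd Y HY) with (f := fmor F (pickM m)); auto; try apply Gob_S0.
  - rewrite F_src, <- F_xid. symmetry. apply Gob_blk. exact E1.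
  - rewrite F_tgt, <- F_xid. symmetry. apply Gob_blk. exact E2.
Qed.

Definition Gmor (m : RmorT X) : RmorT Y :=
  exist _ (proj1_sig (Gob (R_src m)), proj1_sig (Gob (R_tgt m)), blk Y (fmor F (pickM m)))
    (conj (Gob_S0 _) (conj (Gob_S0 _) (Gmor_inS m))).

Definition GF : Fun (RC X) (RC Y) := mkFun (RC X) (RC Y) Gob Gmor.

Lemma GF_RF : is_RF F GF.
Proof.
  split.
  - intros a f B. apply Gob_blk. exact B.
  - intros m f B. simpl. f_equal. apply F_blk. rewrite B. apply pickM_spec.
Qed.

Lemma GF_functor : is_functor GF.
Proof.
  split; [|split].
  - intro f. split; apply Rob_eq; reflexivity.
  - intros t s E. apply (RC_st X) in E. apply R_eq.
    destruct (R_cmp_ex X HX t s E) as [f [g [Bf [Bg [Sg V]]]]].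
    assert (Es : R_src (@cmp (RC X) t s) = R_src s)
      by (apply Rob_eq; change (ra (@cmp (RC X) t s) = ra s); rewrite V; reflexivity).
    assert (Et : R_tgt (@cmp (RC X) t s) = R_tgt t)
      by (apply Rob_eq; change (rb (@cmp (RC X) t s) = rb t); rewrite V; reflexivity).
    change (fmor GF t) with (Gmor t). change (fmor GF s) with (Gmor s).
    rewrite (R_cmp_spec Y HY (Gmor t) (Gmor s) (fmor F f) (fmor F g)).
    + simpl. change (R_cmp t s) with (@cmp (RC X) t s). rewrite Es, Et. f_equal.
      rewrite <- F_cmp; auto. apply F_blk. rewrite pickM_spec, V. reflexivity.
    + simpl. apply F_blk. rewrite pickM_spec. auto.
    + simpl. apply F_blk. rewrite pickM_spec. auto.
    + rewrite F_src, F_tgt, Sg. reflexivity.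
  - intros m I. apply (RC_id_of Y HY).
    + simpl. change (R_src m) with (@src (RC X) m). rewrite (id_st I). reflexivity.
    + destruct (RC_id_val X HX m I) as [_ E]. simpl. apply F_blk.
      rewrite pickM_spec, E. symmetry. apply pickS_spec.
Qed.

(* Naturality of eps: for any G = R~(F), eps_Y o S~(G) = F o eps_X.  On
   objects, F maps the representative defining eps_X m to one ending at a
   base point; on morphisms this follows by thinness. *)
Lemma eps_natural (G : Fun (RC X) (RC Y)) : is_RF F G ->
  feq (fcomp (epsF Y) (SF G)) (fcomp F (epsF X)).
Proof.
  intros [R1 R2].
  assert (Gtgt : forall m, R_tgt (fmor G m) = fob G (R_tgt m)).
  { intro m. destruct (m_pick X HX m) as [f Bf]. apply Rob_eq. simpl.
    rewrite (R2 m f Bf). reflexivity. }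
  assert (Ob : forall m, eps_ob Y (fmor G m) = fob F (eps_ob X m)).
  { intro m. destruct (eps_ob_spec X HX m) as [g [Bg [Sg [Tg Eg]]]].
    rewrite <- Sg, <- F_src. symmetry. apply (eps_ob_uniq Y HY).
    - rewrite (R2 m g Bg). reflexivity.
    - rewrite F_tgt. apply F_base. exact Tg.
    - rewrite (R2 m g Bg). simpl. rewrite F_tgt, <- F_xid. symmetry. apply R1. exact Eg. }
  split.
  - intro m. simpl. apply Ob.
  - intro p. simpl.
    assert (V : proj1_sig (SF_mor G p) =
                (fmor G (fst (proj1_sig p)), fmor G (snd (proj1_sig p)))).
    { apply SF_mor_val.
      change (R_tgt (fmor G (fst (proj1_sig p))) = R_tgt (fmor G (snd (proj1_sig p)))).
      rewrite !Gtgt. f_equal. apply (proj2_sig p). }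
    destruct (eps_mor_spec X HX p) as [B1 B2].
    apply (eps_mor_char Y HY).
    + rewrite F_src, B1, V. symmetry. apply Ob.
    + rewrite F_tgt, B2, V. symmetry. apply Ob.
Qed.
End RFunctor.

(* Existence: apply fullness of S~ to Q_X o P;
   uniqueness: eps_X o S~(F) determines F on morphisms, Q_X being inverse
   to eps_X. *)
Lemma eps_universal (X : Smd) (H : Cat) (P : Fun (scat (SH H)) (scat X)) :
  is_tASmd0 X -> is_groupoid H -> is_tmor (SH H) X P ->
  exists F : Fun H (RC X), is_functor F /\ feq (fcomp (epsF X) (SF F)) P /\
    forall F' : Fun H (RC X), is_functor F' ->
      feq (fcomp (epsF X) (SF F')) P -> feq F F'.
Proof.
  intros HX HG HP.
  assert (HQP : is_tmor (SH H) (SH (RC X)) (fcomp (QF X HX) P))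
    by (apply (tmor_comp _ X); auto; apply Q_tmor).
  destruct (SF_full HG (RC_gpd X HX) HQP) as [F [HF [E1 E2]]].
  exists F. split; [exact HF|split].
  - split.
    + intro g. simpl. simpl in E1. rewrite E1. apply eps_Q.
    + intro p. simpl. simpl in E2. rewrite E2. apply eps_Q_mor.
  - intros F' HF' [E1' E2']. apply functor_ob_eq; auto; [apply HG|].
    intro g. simpl in E1, E1'. rewrite E1, <- E1'. apply Q_eps.
Qed.

Theorem theorem4p11 :
  (* S~ is a functor Gpd -> (tASmd)_0 *)
  (forall H : Cat, is_groupoid H -> is_tASmd0 (SH H)) /\
  (forall (H H' : Cat) (F : Fun H H'), is_groupoid H -> is_groupoid H' ->
     is_functor F -> is_tmor (SH H) (SH H') (SF F)) /\
  (forall H : Cat, is_groupoid H -> feq (SF (fid H)) (fid (scat (SH H)))) /\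
  (forall (H1 H2 H3 : Cat) (F : Fun H1 H2) (G : Fun H2 H3),
     is_groupoid H1 -> is_groupoid H2 -> is_groupoid H3 ->
     is_functor F -> is_functor G -> feq (SF (fcomp G F)) (fcomp (SF G) (SF F))) /\
  (* S~ is faithful *)
  (forall (H H' : Cat) (F G : Fun H H'), is_groupoid H -> is_groupoid H' ->
     is_functor F -> is_functor G -> feq (SF F) (SF G) -> feq F G) /\
  (* S~ is full *)
  (forall (H H' : Cat) (P : Fun (scat (SH H)) (scat (SH H'))),
     is_groupoid H -> is_groupoid H' -> is_tmor (SH H) (SH H') P ->
     exists F : Fun H H', is_functor F /\ feq (SF F) P) /\
  (* S~ is essentially surjective *)
  (forall X : Smd, is_tASmd0 X ->
     exists H : Cat, is_groupoid H /\
     exists (P : Fun (scat (SH H)) (scat X)) (Q : Fun (scat X) (scat (SH H))),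
       is_tmor (SH H) X P /\ is_tmor X (SH H) Q /\
       feq (fcomp Q P) (fid _) /\ feq (fcomp P Q) (fid _)) /\
  (* R~ : (tASmd)_0 -> Gpd *)
  (forall X : Smd, is_tASmd0 X -> is_groupoid (RC X)) /\
  (forall (X Y : Smd) (F : Fun (scat X) (scat Y)), is_tASmd0 X -> is_tASmd0 Y ->
     is_tmor X Y F -> exists G : Fun (RC X) (RC Y), is_RF F G /\ is_functor G) /\
  (* R~ is right adjoint to S~: a natural counit with the universal property *)
  (exists eps : forall X : Smd, Fun (scat (SH (RC X))) (scat X),
     (forall X : Smd, is_tASmd0 X -> is_tmor (SH (RC X)) X (eps X)) /\
     (forall (X Y : Smd) (F : Fun (scat X) (scat Y)) (G : Fun (RC X) (RC Y)),
        is_tASmd0 X -> is_tASmd0 Y -> is_tmor X Y F -> is_RF F G ->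
        feq (fcomp (eps Y) (SF G)) (fcomp F (eps X))) /\
     (forall (X : Smd) (H : Cat) (P : Fun (scat (SH H)) (scat X)),
        is_tASmd0 X -> is_groupoid H -> is_tmor (SH H) X P ->
        exists F : Fun H (RC X), is_functor F /\ feq (fcomp (eps X) (SF F)) P /\
          forall F' : Fun H (RC X), is_functor F' ->
            feq (fcomp (eps X) (SF F')) P -> feq F F')).
Proof.
  split; [exact SH_tASmd0|].
  split; [exact SF_tmor|].
  split; [intros H _; apply SF_fid|].
  split; [intros H1 H2 H3 F G _ _ _; apply SF_fcomp|].
  split; [intros H H' F G HG _; apply SF_faithful; exact HG|].
  split; [intros H H' P HG HG'; apply SF_full; auto|].
  split.
  { intros X HX. exists (RC X). split; [apply RC_gpd; auto|].
    exists (epsF X), (QF X HX).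
    split; [apply eps_tmor; auto|split; [apply Q_tmor|apply eps_Q_iso]]. }
  split; [exact RC_gpd|].
  split.
  { intros X Y F HX HY HF. exists (GF X Y HX HY F HF). split; [apply GF_RF|apply GF_functor]. }
  exists epsF. split; [exact eps_tmor|split].
  - intros X Y F G HX HY HF. apply eps_natural; auto.
  - exact eps_universal.
Qed.
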